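(* Let $D$ be a total clone on $\{0,1\}$ with $D \subseteq T_{0,2}$. Then $\mathcal{I}_{\mathrm{str}}(D)$ has the cardinality of the continuum.
   Context: Let $\mathbf{2}=\{0,1\}$. A partial function of arity $n$ on $\mathbf{2}$ is a map $f:\operatorname{dom} f\to\mathbf{2}$ with $\operatorname{dom} f\subseteq \mathbf{2}^n$; it is total if $\operatorname{dom} f=\mathbf{2}^n$. $P_{\mathbf{2}}$ is the set of all partial functions, $O_{\mathbf{2}}$ the set of total ones. Composition $F=f(g_1,\dots,g_n)$ is given by $F(\mathbf{x})=f(g_1(\mathbf{x}),\dots,g_n(\mathbf{x}))$ on $\operatorname{dom} F=\{\mathbf{x}\in\bigcap_i\operatorname{dom} g_i : (g_1(\mathbf{x}),\dots,g_n(\mathbf{x}))\in\operatorname{dom} f\}$. A partial clone is a composition-closed subset of $P_{\mathbf{2}}$ containing all projections; a total clone is one contained in $O_{\mathbf{2}}$. A partial clone $X$ is strong if it contains every restriction of each of its members. For a total clone $C$, $\mathcal{I}_{\mathrm{str}}(C)$ is the set of all strong partial clones $X$ with $X\cap O_{\mathbf{2}}=C$. A total $n$-ary $f$ preserves a binary relation $\rho$ if for all $(a_1,b_1),\dots,(a_n,b_n)\in\rho$ we have $(f(a_1,\dots,a_n),f(b_1,\dots,b_n))\in\rho$. $T_{0,2}$ is the clone of all total Boolean functions preserving $\rho_{0,2}=\{(0,0),(0,1),(1,0)\}$. *)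

From mathcomp Require Import all_boot.
Set Implicit Arguments. Unset Strict Implicit. Unset Printing Implicit Defensive.

(* A partial Boolean function of arity n: a map from 2^n to option bool;
   [f x = None] means x is outside dom f. *)
Definition PF (n : nat) := {ffun n.-tuple bool -> option bool}.

(* Families of partial functions, indexed by arity; component [n] holds
   the functions of arity [n.+1] (arities are >= 1, as usual in clone theory). *)
Definition Family := forall n : nat, {set PF n.+1}.

Definition proj (n : nat) (i : 'I_n) : PF n := [ffun x => Some (tnth x i)].

Definition comp (k m : nat) (f : PF k) (gs : k.-tuple (PF m)) : PF m :=
  [ffun x => if [forall i : 'I_k, tnth gs i x != None]
             then f [tuple odflt false (tnth gs i x) | i < k]
             else None].

Definition total (n : nat) (f : PF n) : Prop := forall x, f x <> None.

Definition restriction (n : nat) (g f : PF n) : Prop :=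
  forall x, g x <> None -> g x = f x.

Definition partial_clone (X : Family) : Prop :=
  (forall n (i : 'I_n.+1), proj i \in X n) /\
  (forall k m (f : PF k.+1) (gs : k.+1.-tuple (PF m.+1)),
      f \in X k -> (forall i, tnth gs i \in X m) -> comp f gs \in X m).

Definition total_clone (C : Family) : Prop :=
  partial_clone C /\ (forall n f, f \in C n -> total f).

Definition strong (X : Family) : Prop :=
  forall n (f g : PF n.+1), f \in X n -> restriction g f -> g \in X n.

Definition Istr (C : Family) (X : Family) : Prop :=
  partial_clone X /\ strong X /\
  (forall n (f : PF n.+1), (f \in X n /\ total f) <-> f \in C n).

Definition rho02 (a b : bool) : bool := ~~ (a && b).

Definition preserves_rho02 (n : nat) (f : PF n) : Prop :=
  forall a b : n.-tuple bool,
    (forall i, rho02 (tnth a i) (tnth b i)) ->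
    rho02 (odflt false (f a)) (odflt false (f b)).

Definition in_T02 (n : nat) (f : PF n) : Prop := total f /\ preserves_rho02 f.

Definition card_continuum (P : Family -> Prop) : Prop :=
  exists F : (nat -> bool) -> Family,
    injective F /\ (forall s, P (F s)) /\ (forall X, P X -> exists s, F s = X).

From Pilot Require Import Defs.
From mathcomp Require Import all_boot zify.
From mathcomp Require Import boolp classical_sets functions cardinality.
Set Implicit Arguments. Unset Strict Implicit. Unset Printing Implicit Defensive.

(* For k : nat let G_k be a clique on k+3 vertices together with a path of length
   2k+3 joining two of its vertices.  A homomorphism G_k -> G_m maps the clique (the
   union of the triangles) injectively into the clique, so k <= m, and it does not
   increase the distance to the clique, so for k < m no vertex is sent to the middle
   edge of the path of G_m.  Let R_k be the relation of independent sets of G_k.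
   Every member of T_{0,2} preserves every R_k.  The partial function h_m defined on
   the rows of a matrix whose columns are the small independent sets of G_m, with
   value 1 exactly on the two rows of the middle edge, preserves R_k iff k <> m.
   For S : nat -> bool, the restrictions of members of D together with the partial
   functions undefined at 0...0 that preserve R_k for every k outside S form a strong
   partial clone X_S with total part D, and h_m is in X_S iff S m.  So S |-> X_S is
   injective, and Cantor-Bernstein against a coding of families by nat -> bool gives
   the bijection. *)

Definition zeros n : n.-tuple bool := [tuple false | _ < n].

Lemma restriction_trans n (f g h : PF n) :
  restriction f g -> restriction g h -> restriction f h.
Proof. by move=> fg gh x fx; rewrite fg // gh // -fg. Qed.

Lemma restriction_total_eq n (f g : PF n) : Defs.total f -> restriction f g -> f = g.
Proof. by move=> f_tot fg; apply/ffunP => x; apply: fg. Qed.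

Lemma comp_defined k m (f : PF k) (gs : k.-tuple (PF m)) x :
  Defs.comp f gs x <> None -> forall i, tnth gs i x <> None.
Proof. by rewrite ffunE; case: ifP => // /forallP gs_def _ i; apply/eqP. Qed.

Lemma compE k m (f : PF k) (gs : k.-tuple (PF m)) x :
  (forall i, tnth gs i x <> None) ->
  Defs.comp f gs x = f [tuple odflt false (tnth gs i x) | i < k].
Proof.
by move=> gs_def; rewrite ffunE; case: forallP => // [[i]]; apply/eqP.
Qed.

Lemma restriction_comp k m (f d : PF k) (gs ds : k.-tuple (PF m)) :
  restriction f d -> (forall i, restriction (tnth gs i) (tnth ds i)) ->
  restriction (Defs.comp f gs) (Defs.comp d ds).
Proof.
move=> fd gds x fx; have gs_def := comp_defined fx.
have gdsx i : tnth gs i x = tnth ds i x by apply: gds.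
have ds_def i : tnth ds i x <> None by rewrite -gdsx.
rewrite !compE // in fx *.
have -> : [tuple odflt false (tnth ds i x) | i < k] =
          [tuple odflt false (tnth gs i x) | i < k].
  by apply: eq_mktuple => i; rewrite gdsx.
exact: fd.
Qed.

Lemma in_T02_zeros n (d : PF n) : in_T02 d -> d (zeros n) = Some false.
Proof.
case=> d_tot d_pres.
have zz i : rho02 (tnth (zeros n) i) (tnth (zeros n) i) by rewrite tnth_mktuple.
by move: (d_pres _ _ zz) (d_tot (zeros n)); rewrite /rho02; case: (d (zeros n)) => [[]|].
Qed.

(* G_k has the vertices 0 .. nverts k - 1, the path 0 - 1 - ... - path_len k and the
   clique on {0} U [path_len k, nverts k); depth is the distance to the clique. *)
Definition path_len k := 2 * k + 3.
Definition nverts k := 3 * k + 5.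
Definition clique k v := (v == 0) || (path_len k <= v).
Definition adj k u v : bool :=
  ((u.+1 == v) || (v.+1 == u)) && (u <= path_len k) && (v <= path_len k)
  || clique k u && clique k v && (u != v).
Definition depth k v := if clique k v then 0 else minn v (path_len k - v).
Definition is_mid k v := (v == k.+1) || (v == k.+2).

Lemma adj_irr k v : adj k v v = false.
Proof. rewrite /adj /clique /path_len; apply/negbTE/negP; lia. Qed.

Lemma depth_eq0 k v : (depth k v == 0) = clique k v.
Proof. rewrite /depth /clique /path_len; case: ifP => //; lia. Qed.

Lemma depth_adj k u v : adj k u v -> depth k u <= (depth k v).+1.
Proof. rewrite /adj /depth /clique /path_len; do 2 case: ifP; lia. Qed.

Lemma depth_le k v : depth k v <= k.+1.
Proof. rewrite /depth /clique /path_len; case: ifP; lia. Qed.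

Lemma depth_mid k v : is_mid k v -> depth k v = k.+1.
Proof. rewrite /is_mid /depth /clique /path_len; case: ifP; lia. Qed.

Lemma triangle_clique k a b c : adj k a b -> adj k b c -> adj k a c -> clique k a.
Proof. rewrite /adj /clique /path_len; lia. Qed.

Definition hom k m (p : 'I_(nverts k) -> 'I_(nverts m)) :=
  forall u v : 'I_(nverts k), adj k u v -> adj m (p u) (p v).

Lemma clique_triangle k (v : 'I_(nverts k)) : clique k v ->
  exists a b : 'I_(nverts k), [/\ adj k v a, adj k a b & adj k v b].
Proof.
case: v => /= v vN vC.
have [a [b [Na Nb va ab vb]]] : exists a b,
    [/\ a < nverts k, b < nverts k, adj k v a, adj k a b & adj k v b].
  move: vN vC; rewrite /adj /clique /nverts /path_len => vN vC.
  case: (boolP (v == 0)) => v0; first by exists (2 * k + 3), (2 * k + 4); split; lia.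
  case: (boolP (v == 2 * k + 3)) => vL; first by exists 0, (2 * k + 4); split; lia.
  by exists 0, (2 * k + 3); split; lia.
by exists (Ordinal Na), (Ordinal Nb).
Qed.

Lemma depth_descent k (v : 'I_(nverts k)) : 0 < depth k v ->
  exists2 w : 'I_(nverts k), adj k v w & depth k w < depth k v.
Proof.
case: v => /= v vN dv.
have [w wN [vw dw]] : exists2 w, w < nverts k & adj k v w /\ depth k w < depth k v.
  move: vN dv; rewrite /adj /depth /clique /nverts /path_len => vN.
  case: ifP => // vC dv.
  case: (leqP v (2 * k + 3 - v)) => h.
    by exists v.-1; [lia | split; [lia | case: ifP; lia]].
  by exists v.+1; [lia | split; [lia | case: ifP; lia]].
by exists (Ordinal wN).
Qed.

Section Homomorphism.
Variables (k m : nat) (p : 'I_(nverts k) -> 'I_(nverts m)).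
Hypothesis p_hom : hom p.

Lemma hom_clique (v : 'I_(nverts k)) : clique k v -> clique m (p v).
Proof.
case/clique_triangle=> a [b [va ab vb]].
exact: triangle_clique (p_hom va) (p_hom ab) (p_hom vb).
Qed.

Lemma hom_depth (v : 'I_(nverts k)) : depth m (p v) <= depth k v.
Proof.
have [n] := ubnP (depth k v); elim: n v => // n IH v /ltnSE dvn.
have [/eqP|/depth_descent [w vw wv]] := posnP (depth k v).
  by rewrite depth_eq0 => /hom_clique; rewrite -depth_eq0 => /eqP ->.
apply: leq_trans (depth_adj (p_hom vw)) _.
exact: leq_ltn_trans (IH w (leq_trans wv dvn)) wv.
Qed.

Lemma hom_not_mid (v : 'I_(nverts k)) : k < m -> ~~ is_mid m (p v).
Proof.
move=> km; apply/negP => /depth_mid dp.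
by have := leq_trans (hom_depth v) (depth_le k v); rewrite dp ltnNge km.
Qed.

Lemma hom_le : k <= m.
Proof.
pose vert i := if i == 0 then 0 else path_len k + i - 1.
pose index v := if v == 0 then 0 else v - path_len m + 1.
have vertN (i : 'I_k.+3) : vert i < nverts k.
  by move: (ltn_ord i); rewrite /vert /nverts /path_len; case: ifP; lia.
have vert_adj i j : i < k.+3 -> j < k.+3 -> i != j -> adj k (vert i) (vert j).
  by rewrite /vert /adj /clique /path_len; do 2 case: ifP; lia.
have vertC (i : 'I_k.+3) : clique k (vert i).
  by rewrite /vert /clique; case: ifP => //; lia.
have indexN (v : 'I_(nverts m)) : clique m v -> index v < m.+3.
  by case: v => v /=; rewrite /index /clique /nverts /path_len; case: ifP; lia.
have index_adj u v : clique m u -> clique m v -> adj m u v -> index u != index v.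
  by rewrite /index /adj /clique /path_len; do 2 case: ifP; lia.
pose f (i : 'I_k.+3) : 'I_m.+3 := inord (index (p (Ordinal (vertN i)))).
suff /leq_card : injective f by rewrite !card_ord.
have pC (i : 'I_k.+3) : clique m (p (Ordinal (vertN i))) by apply: hom_clique; apply: vertC.
move=> i j /(congr1 val); rewrite /f /= !inordK ?indexN //; apply: contra_eq => ij.
have ij' : adj k (Ordinal (vertN i)) (Ordinal (vertN j)) by apply: vert_adj.
exact: index_adj (pC i) (pC j) (p_hom ij').
Qed.

End Homomorphism.

Definition indep k (s : 'I_(nverts k) -> bool) :=
  forall u v : 'I_(nverts k), adj k u v -> ~~ (s u && s v).
Arguments indep : clear implicits.

(* f preserves the relation of independent sets of G_k, of arity [nverts k]; the rows of
   X are the arguments of f and its columns the tuples of the relation. *)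
Definition preserves_indep k n (f : PF n) :=
  forall X : 'I_(nverts k) -> n.-tuple bool,
    (forall j, indep k (fun v => tnth (X v) j)) -> (forall v, f (X v) <> None) ->
    indep k (fun v => odflt false (f (X v))).

Lemma in_T02_preserves_indep k n (d : PF n) : in_T02 d -> preserves_indep k d.
Proof. by case=> _ d_pres X X_indep _ u v uv; apply: d_pres => j; apply: X_indep. Qed.

Lemma preserves_indep_restriction k n (f g : PF n) :
  restriction g f -> preserves_indep k f -> preserves_indep k g.
Proof.
move=> gf f_pres X X_indep g_def.
have gfX v : g (X v) = f (X v) by apply: gf.
by move=> u v; rewrite !gfX; apply: f_pres => // w; rewrite -gfX.
Qed.

Lemma preserves_indep_comp k a m (f : PF a) (gs : a.-tuple (PF m)) :
  preserves_indep k f -> (forall i, preserves_indep k (tnth gs i)) ->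
  preserves_indep k (Defs.comp f gs).
Proof.
move=> f_pres gs_pres X X_indep comp_def.
pose Y v := [tuple odflt false (tnth gs i (X v)) | i < a].
have compY v : Defs.comp f gs (X v) = f (Y v) by apply/compE/comp_defined.
move=> u v; rewrite !compY; apply: f_pres => [i|w]; last by rewrite -compY.
by move=> x y xy; rewrite !tnth_mktuple; apply: gs_pres => // w; apply: comp_defined.
Qed.

Definition npairs m := nverts m * nverts m.

(* Coordinate j stands for the pair of vertices (j %/ nverts m, j %% nverts m); the
   columns of the matrix with rows [pair_row m v] are the indicators of all independent
   sets of G_m with at most two elements (the last coordinate is a dummy one). *)
Definition pair_row m (v : nat) : (npairs m).+1.-tuple bool :=
  [tuple ((v == j %/ nverts m) || (v == j %% nverts m)) &&
         ~~ adj m (j %/ nverts m) (j %% nverts m)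
  | j < (npairs m).+1].

Lemma pair_coord m (a b : 'I_(nverts m)) :
  exists j : 'I_(npairs m).+1, j %/ nverts m = a /\ j %% nverts m = b.
Proof.
case: a b => [a aN] [b bN] /=.
have N0 : 0 < nverts m by rewrite /nverts; lia.
have jN : a * nverts m + b < (npairs m).+1.
  by move: aN bN; rewrite /npairs; move: (nverts m) => N; nia.
exists (Ordinal jN) => /=.
by rewrite divnMDl // divn_small // addn0 modnMDl modn_small.
Qed.

Lemma pair_row_indep m j : indep m (fun v => tnth (pair_row m v) j).
Proof.
move=> u v; rewrite !tnth_mktuple; move: (_ %/ _) (_ %% _) => a b.
by rewrite /adj /clique /path_len; lia.
Qed.

Lemma pair_row_diag m (v : 'I_(nverts m)) (j : 'I_(npairs m).+1) :
  j %/ nverts m = v -> j %% nverts m = v -> tnth (pair_row m v) j.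
Proof. by rewrite tnth_mktuple => -> ->; rewrite eqxx adj_irr. Qed.

Lemma pair_row_inj m : injective (fun v : 'I_(nverts m) => pair_row m v).
Proof.
move=> u v /= uv; apply/val_inj.
have [j [ju ju']] := pair_coord u u.
by move: (pair_row_diag ju ju'); rewrite uv tnth_mktuple ju ju' orbb => /andP [/eqP].
Qed.

Lemma pair_row_neq0 m (v : 'I_(nverts m)) : pair_row m v != zeros _.
Proof.
apply/eqP => v0.
have [j [jv jv']] := pair_coord v v.
by move: (pair_row_diag jv jv'); rewrite v0 tnth_mktuple.
Qed.

Lemma hom_of_indep_rows k m (psi : 'I_(nverts k) -> 'I_(nverts m)) :
  (forall j, indep k (fun w => tnth (pair_row m (psi w)) j)) -> hom psi.
Proof.
move=> psi_indep u v uv; apply: contraT => nuv.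
have [j [ju jv]] := pair_coord (psi u) (psi v).
by move: (psi_indep j u v uv); rewrite !tnth_mktuple ju jv (negbTE nuv) !eqxx orbT.
Qed.

Definition row_index m (x : (npairs m).+1.-tuple bool) : option 'I_(nverts m) :=
  [pick v : 'I_(nverts m) | x == pair_row m v].

Definition mid_fun m : PF (npairs m).+1 :=
  [ffun x => omap (fun v : 'I_(nverts m) => is_mid m v) (row_index x)].

Lemma row_indexP m x v : row_index x = Some v -> x = pair_row m v.
Proof. by rewrite /row_index; case: pickP => // w /eqP -> [<-]. Qed.

Lemma row_index_row m (v : 'I_(nverts m)) : row_index (pair_row m v) = Some v.
Proof.
rewrite /row_index; case: pickP => [w /eqP /pair_row_inj -> //|].
by move/(_ v); rewrite eqxx.
Qed.

Lemma mid_fun_row m (v : 'I_(nverts m)) : mid_fun m (pair_row m v) = Some (is_mid m v).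
Proof. by rewrite ffunE row_index_row. Qed.

Lemma mid_fun_zeros m : mid_fun m (zeros _) = None.
Proof.
rewrite ffunE; case E: (row_index _) => [v|] //.
by have := pair_row_neq0 v; rewrite -(row_indexP E) eqxx.
Qed.

Lemma mid_fun_not_preserves m : ~ preserves_indep m (mid_fun m).
Proof.
have tN : m.+2 < nverts m by rewrite /nverts; lia.
have tN' : m.+1 < nverts m by rewrite /nverts; lia.
have row_def (v : 'I_(nverts m)) : mid_fun m (pair_row m v) <> None by rewrite mid_fun_row.
have mid_adj : adj m (Ordinal tN') (Ordinal tN) by rewrite /adj /path_len /=; lia.
move=> /(_ (fun v => pair_row m v) (@pair_row_indep m) row_def _ _ mid_adj).
by rewrite !mid_fun_row /is_mid /= !eqxx orbT.
Qed.

Lemma mid_fun_preserves k m : k != m -> preserves_indep k (mid_fun m).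
Proof.
move=> km X X_indep X_def u v uv.
have N0 : 0 < nverts m by rewrite /nverts; lia.
pose psi w := odflt (Ordinal N0) (row_index (X w)).
have XE w : X w = pair_row m (psi w).
  move: (X_def w); rewrite ffunE /psi; case E: (row_index _) => [y|] // _.
  exact: row_indexP.
have psi_hom : hom psi.
  by apply: hom_of_indep_rows => j a b /(X_indep j); rewrite -!XE.
rewrite !XE !mid_fun_row /=.
case: ltngtP km => // [lt_km | lt_mk] _.
  by rewrite (negbTE (hom_not_mid psi_hom u lt_km)).
by have := hom_le psi_hom; rewrite leqNgt lt_mk.
Qed.

Definition restricts_into (D : Family) n (f : PF n.+1) :=
  exists2 d, d \in D n & restriction f d.

Definition pol_compl (S : nat -> bool) n (f : PF n) :=
  f (zeros n) = None /\ forall k, ~~ S k -> preserves_indep k f.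

Definition strong_clone (D : Family) (S : nat -> bool) : Family :=
  fun n => [set f : PF n.+1 | `[< restricts_into D f \/ pol_compl S f >]].

Lemma in_strong_clone D S n (f : PF n.+1) :
  f \in strong_clone D S n <-> restricts_into D f \/ pol_compl S f.
Proof. by rewrite inE; split => /asboolP. Qed.

Section StrongClone.
Variable D : Family.
Hypothesis D_clone : total_clone D.
Hypothesis D_T02 : forall n (f : PF n.+1), f \in D n -> in_T02 f.

Lemma restricts_into_preserves_indep k n (f : PF n.+1) :
  restricts_into D f -> preserves_indep k f.
Proof.
case=> d dD fd; apply: preserves_indep_restriction fd _.
exact/in_T02_preserves_indep/D_T02.
Qed.

Lemma restricts_into_comp k m (f : PF k.+1) (gs : k.+1.-tuple (PF m.+1)) :
  restricts_into D f -> (forall i, restricts_into D (tnth gs i)) ->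
  restricts_into D (Defs.comp f gs).
Proof.
case=> d dD fd /fin_all_exists2 [ds dsD gsds].
exists (Defs.comp d [tuple ds i | i < k.+1]).
  by apply: D_clone.1.2 => // i; rewrite tnth_mktuple.
by apply: restriction_comp fd _ => i; rewrite tnth_mktuple.
Qed.

Variable S : nat -> bool.
Local Notation X := (strong_clone D S).

Lemma strong_clone_preserves_indep k n (f : PF n.+1) :
  f \in X n -> ~~ S k -> preserves_indep k f.
Proof.
case/in_strong_clone => [/restricts_into_preserves_indep //|[_ f_pres]].
exact: f_pres.
Qed.

Lemma strong_clone_zeros n (f : PF n.+1) : f \in X n -> f (zeros _) <> None ->
  restricts_into D f /\ f (zeros _) = Some false.
Proof.
case/in_strong_clone => [[d dD fd] f0|[-> //]]; split; first by exists d.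
by rewrite fd //; apply/in_T02_zeros/D_T02.
Qed.

Lemma strong_clone_comp k m (f : PF k.+1) (gs : k.+1.-tuple (PF m.+1)) :
  f \in X k -> (forall i, tnth gs i \in X m) -> Defs.comp f gs \in X m.
Proof.
move=> fX gsX; apply/in_strong_clone.
have [[fD gsD]|notD] :=
  pselect (restricts_into D f /\ forall i, restricts_into D (tnth gs i)).
  by left; apply: restricts_into_comp.
right; split=> [|l Sl]; last first.
  by apply: preserves_indep_comp => [|i]; apply: strong_clone_preserves_indep.
apply: contra_notP notD => comp0.
have gs0 i := strong_clone_zeros (gsX i) (comp_defined comp0 (i := i)).
have args0 : [tuple odflt false (tnth gs i (zeros _)) | i < k.+1] = zeros _.
  by apply: eq_from_tnth => i; rewrite !tnth_mktuple (gs0 i).2.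
rewrite compE ?args0 in comp0; last by move=> i; rewrite (gs0 i).2.
by split=> [|i]; [case: (strong_clone_zeros fX comp0) | case: (gs0 i)].
Qed.

Lemma Istr_strong_clone : Istr D X.
Proof.
split; [split|split].
- by move=> n i; apply/in_strong_clone; left; exists (proj i) => //; apply: D_clone.1.1.
- exact: strong_clone_comp.
- move=> n f g /in_strong_clone [[d dD fd]|[f0 f_pres]] gf; apply/in_strong_clone.
    by left; exists d => //; apply: restriction_trans gf fd.
  right; split=> [|k Sk]; last exact: preserves_indep_restriction gf (f_pres k Sk).
  by case g0: (g (zeros _)) => //; rewrite -g0 gf // g0.
- move=> n f; split=> [[/in_strong_clone [[d dD fd]|[f0 _]] f_tot]|fD].
  + by rewrite (restriction_total_eq f_tot fd).
  + by have := f_tot (zeros _).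
  + by split; [apply/in_strong_clone; left; exists f | apply: D_clone.2 fD].
Qed.

End StrongClone.

Lemma mid_fun_in_strong_clone (D : Family) S m :
  (forall n (f : PF n.+1), f \in D n -> in_T02 f) ->
  (mid_fun m \in strong_clone D S (npairs m)) = S m.
Proof.
move=> D_T02; apply/idP/idP => [|Sm].
  case/in_strong_clone => [/(restricts_into_preserves_indep D_T02 (k := m))|[_ pres]].
    by move/mid_fun_not_preserves.
  by apply: contraT => /pres /mid_fun_not_preserves.
apply/in_strong_clone; right; split=> [|k Sk]; first exact: mid_fun_zeros.
by apply: mid_fun_preserves; apply: contraNneq Sk => ->.
Qed.

Lemma strong_clone_inj (D : Family) :
  (forall n (f : PF n.+1), f \in D n -> in_T02 f) -> injective (strong_clone D).
Proof.
move=> D_T02 S S' SS'; apply/funext => m.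
by rewrite -!(mid_fun_in_strong_clone _ _ D_T02) SS'.
Qed.

Definition family_code (X : Family) (c : nat) : bool :=
  if unpickle c is Some (n, s) then pickle (X n) == s else false.

Lemma family_code_inj : injective family_code.
Proof.
move=> X Y XY; apply: functional_extensionality_dep => n.
move: (congr1 (fun code => code (pickle (n, pickle (X n)))) XY).
by rewrite /family_code pickleK eqxx => /esym/eqP/(pcan_inj pickleK).
Qed.

Lemma card_le_inj (T U : Type) (A : set T) (B : set U) (f : T -> U) :
  (forall x, A x -> B (f x)) -> (forall x y, A x -> A y -> f x = f y -> x = y) ->
  (A #<= B)%card.
Proof.
move=> fAB f_inj; have [g] : $|{injfun A >-> B}|.
  by apply/injfunPex; exists f => // x y /set_mem Ax /set_mem Ay; apply: f_inj.
exact: inj_card_le.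
Qed.

Lemma card_eq_setT_bij (T U : Type) (P : U -> Prop) :
  ([set: T] #= P)%card ->
  exists F : T -> U,
    injective F /\ (forall t, P (F t)) /\ (forall u, P u -> exists t, F t = u).
Proof.
case/card_bijP => f [g fK gK].
pose F t := sval (f (SigSub (mem_set (I : setT t)))).
exists F; split; [|split].
- by move=> t t' /val_inj/(can_inj fK)/(congr1 sval).
- by move=> t; apply: set_mem (svalP (f _)).
- move=> u Pu; exists (sval (g (SigSub (mem_set Pu)))).
  by rewrite /F (_ : SigSub _ = g (SigSub (mem_set Pu))) ?gK //; apply: val_inj.
Qed.

Theorem mainTheorem4 (D : Family) :
  total_clone D ->
  (forall n (f : PF n.+1), f \in D n -> in_T02 f) ->
  card_continuum (Istr D).
Proof.
move=> D_clone D_T02; apply: card_eq_setT_bij; apply: Cantor_Bernstein.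
  apply: (@card_le_inj _ _ _ _ (strong_clone D)) => [S _|S S' _ _].
    exact: Istr_strong_clone.
  exact: strong_clone_inj.
by apply: (@card_le_inj _ _ _ _ family_code) => // X Y _ _ /family_code_inj.
Qed.
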